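(* Consider a region discretized by the FDTD-Q scheme described in the context, with $0<\Delta t<\Delta t_{\mathrm{CFL,gen}}=2/\rho\!\left(\frac{1}{\hbar}(D_V'')^{-1/2}H(D_V'')^{-1/2}\right)$ ($\rho$ the spectral radius), and assume $\mathcal{I}_P^{n+\frac12}=0$ for all $n=0,1,\dots,n_t-1$. Then $$\|\psi^n\|_2\le\sqrt{\kappa(\mathbf{P})}\,\|\psi^0\|_2,\qquad n=0,1,\dots,n_t,$$ where $\kappa(\mathbf{P})$ is the (2-norm) condition number of $\mathbf{P}$.
   Context: Fix constants $\hbar>0$, $m>0$, cell sizes $\Delta x,\Delta y,\Delta z>0$, positive integers $n_x,n_y,n_z,n_t$ and a time step $\Delta t>0$. The region is a box made of $n_x\times n_y\times n_z$ primary cells of size $\Delta x\times\Delta y\times\Delta z$, with primary nodes $(i,j,k)$, $1\le i\le n_x+1$, $1\le j\le n_y+1$, $1\le k\le n_z+1$. Let $N=(n_x+1)(n_y+1)(n_z+1)$; vectors indexed by nodes use the ordering $i+(j-1)(n_x+1)+(k-1)(n_x+1)(n_y+1)$. Real potential values $U_{i,j,k}$ are given at the nodes; $D_U$ is the $N\times N$ diagonal matrix containing them. Let $I_p$ be the $p\times p$ identity, $\tilde I_p=\mathrm{diag}(\tfrac12,1,\dots,1,\tfrac12)$ ($p\times p$), $W_p=[0_{p\times1}\ I_p]-[I_p\ 0_{p\times 1}]$ ($p\times(p+1)$), $\otimes$ the Kronecker product, and $e\{p,q\}$ the $q\times 1$ vector with $1$ in position $p$ and zeros elsewhere. Define $D_V''=\Delta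 x\Delta y\Delta z\,\tilde I_{n_z+1}\otimes\tilde I_{n_y+1}\otimes\tilde I_{n_x+1}$; $D=[D_x\ D_y\ D_z]$ with $D_x=-I_{n_z+1}\otimes I_{n_y+1}\otimes W_{n_x}^T$, $D_y=-I_{n_z+1}\otimes W_{n_y}^T\otimes I_{n_x+1}$, $D_z=-W_{n_z}^T\otimes I_{n_y+1}\otimes I_{n_x+1}$; $D_S''=\mathrm{diag}(\Delta y\Delta z\,\tilde I_{n_z+1}\otimes\tilde I_{n_y+1}\otimes I_{n_x},\ \Delta x\Delta z\,\tilde I_{n_z+1}\otimes I_{n_y}\otimes\tilde I_{n_x+1},\ \Delta x\Delta y\,I_{n_z}\otimes\tilde I_{n_y+1}\otimes\tilde I_{n_x+1})$; $D_l'=\mathrm{diag}(\Delta x\, I_{n_x(n_y+1)(n_z+1)},\ \Delta y\, I_{(n_x+1)n_y(n_z+1)},\ \Delta z\, I_{(n_x+1)(n_y+1)n_z})$; $H=\frac{\hbar^2}{2m}D D_S''(D_l')^{-1}D^T+D_V''D_U$; $\mathbf{P}=\begin{bmatrix}D_V''&-\frac{\Delta t}{2\hbar}H\\-\frac{\Delta t}{2\hbar}H&D_V''\end{bmatrix}$. Boundary (''hanging'') variables: $L=[L_W\ L_E\ L_S\ L_N\ L_B\ L_T]$ with $L_W=I_{n_z+1}\otimes I_{n_y+1}\otimes e\{1,n_x+1\}$, $L_E=I_{n_z+1}\otimes I_{n_y+1}\otimes e\{n_x+1,n_x+1\}$, $L_S=I_{n_z+1}\otimes e\{1,n_y+1\}\otimes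 I_{n_x+1}$, $L_N=I_{n_z+1}\otimes e\{n_y+1,n_y+1\}\otimes I_{n_x+1}$, $L_B=e\{1,n_z+1\}\otimes I_{n_y+1}\otimes I_{n_x+1}$, $L_T=e\{n_z+1,n_z+1\}\otimes I_{n_y+1}\otimes I_{n_x+1}$; let $M$ be the number of columns of $L$. $D_{\hat n}=\mathrm{diag}(-I_{(n_y+1)(n_z+1)},I_{(n_y+1)(n_z+1)},-I_{(n_x+1)(n_z+1)},I_{(n_x+1)(n_z+1)},-I_{(n_x+1)(n_y+1)},I_{(n_x+1)(n_y+1)})$; $D_{S,b}''=\mathrm{diag}(\Delta y\Delta z\,\tilde I_{n_z+1}\otimes\tilde I_{n_y+1},\ \Delta y\Delta z\,\tilde I_{n_z+1}\otimes\tilde I_{n_y+1},\ \Delta x\Delta z\,\tilde I_{n_z+1}\otimes\tilde I_{n_x+1},\ \Delta x\Delta z\,\tilde I_{n_z+1}\otimes\tilde I_{n_x+1},\ \Delta x\Delta y\,\tilde I_{n_y+1}\otimes\tilde I_{n_x+1},\ \Delta x\Delta y\,\tilde I_{n_y+1}\otimes\tilde I_{n_x+1})$; $H_\perp=\frac{\hbar^2}{2m}L D_{\hat n}D_{S,b}''$. FDTD-Q scheme: real vectors $\psi_R^n\in\mathbb{R}^N$ and $\psi_I^{n-\frac12}\in\mathbb{R}^N$ ($n=0,\dots,n_t$), and arbitrary boundary vectors $g_R^n\in\mathbb{R}^M$, $g_I^{n+\frac12}\in\mathbb{R}^M$ ($n=0,\dots,n_t-1$), satisfying for $n=0,\dots,n_t-1$: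 $\hbar D_V''\frac{\psi_R^{n+1}-\psi_R^n}{\Delta t}=H\psi_I^{n+\frac12}-H_\perp g_I^{n+\frac12}$ and $\hbar D_V''\frac{\psi_I^{n+\frac12}-\psi_I^{n-\frac12}}{\Delta t}=-H\psi_R^n+H_\perp g_R^n$. Let $\psi^n=\begin{bmatrix}\psi_R^n\\ \psi_I^{n-\frac12}\end{bmatrix}$, $g^{n+\frac12}=\begin{bmatrix}g_R^n\\ g_I^{n+\frac12}\end{bmatrix}$, $J_1=\begin{bmatrix}0&1\\-1&0\end{bmatrix}$. Probability current: $\mathcal{I}_P^{n+\frac12}=\frac{2}{\hbar}\left(\frac{\psi^{n+1}+\psi^n}{2}\right)^T(J_1\otimes H_\perp)g^{n+\frac12}$, $n=0,\dots,n_t-1$. *)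

From HB Require Import structures.
From mathcomp Require Import all_boot all_order all_algebra.
From mathcomp Require Import classical_sets reals.
From mathcomp Require Import complex mxtens.
Set Implicit Arguments. Unset Strict Implicit. Unset Printing Implicit Defensive.
Import Order.TTheory GRing.Theory Num.Theory.
Local Open Scope ring_scope.
Local Open Scope classical_set_scope.

Section Generic.
Variable R : realType.

Definition norm2 {n} (v : 'cV[R]_n) : R := Num.sqrt (\sum_i v i 0 ^+ 2).

Definition opnorm2 {p q} (A : 'M[R]_(p, q)) : R :=
  sup [set norm2 (A *m x) | x in [set x : 'cV[R]_q | norm2 x = 1]].

Definition cond2 {p} (A : 'M[R]_p) : R := opnorm2 A * opnorm2 (invmx A).

Definition specrad {p} (A : 'M[R]_p) : R :=
  sup [set ComplexField.Normc.normc l |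
        l in [set l : R[i] | eigenvalue (map_mx (fun x : R => x%:C%C) A) l]].

Definition diag_invsqrt {p} (D : 'M[R]_p) : 'M[R]_p :=
  \matrix_(i, j) (if i == j then (Num.sqrt (D i i))^-1 else 0).

Definition tI p : 'M[R]_p :=
  \matrix_(i, j) (if i == j then
                    (if (i == 0 :> nat) || (i == p.-1 :> nat) then 2^-1 else 1)
                  else 0).

(* W_p = [0_{p x 1} I_p] - [I_p 0_{p x 1}]  (p x (p+1)) *)
Definition Wm p : 'M[R]_(p, p.+1) :=
  \matrix_(i, j) ((j == i.+1 :> nat)%:R - (j == i :> nat)%:R).

(* e{k,q}: q x 1 vector with 1 in (1-based) position k *)
Definition ev k q : 'cV[R]_q := \col_(i < q) ((i.+1 == k)%N)%:R.

Definition bdiag {m1 n1 m2 n2} (A : 'M[R]_(m1, n1)) (B : 'M[R]_(m2, n2)) :=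
  block_mx A 0 0 B.

End Generic.

Section FDTDQ.
Variables (R : realType) (hbar mass dx dy dz : R) (nx ny nz : nat).
Variable dt : R.

Local Notation I p := (1%:M : 'M[R]_p).
Local Notation "A *t B" := (tensmx A B) (at level 40, left associativity).

(* N = (n_x+1)(n_y+1)(n_z+1), node ordering i + (j-1)(n_x+1) + (k-1)(n_x+1)(n_y+1) *)
Definition Nn := (nz.+1 * ny.+1 * nx.+1)%N.

Definition DVpp : 'M[R]_Nn := (dx * dy * dz) *: (tI R nz.+1 *t tI R ny.+1 *t tI R nx.+1).

Definition DU (U : 'cV[R]_Nn) : 'M[R]_Nn := diag_mx U^T.

Definition Dx := - (I nz.+1 *t I ny.+1 *t (Wm R nx)^T).
Definition Dy := - (I nz.+1 *t (Wm R ny)^T *t I nx.+1).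
Definition Dz := - ((Wm R nz)^T *t I ny.+1 *t I nx.+1).
Definition Dmat := row_mx Dx (row_mx Dy Dz).

Definition DSpp :=
  bdiag ((dy * dz) *: (tI R nz.+1 *t tI R ny.+1 *t I nx))
    (bdiag ((dx * dz) *: (tI R nz.+1 *t I ny *t tI R nx.+1))
           ((dx * dy) *: (I nz *t tI R ny.+1 *t tI R nx.+1))).

Definition Dlp :=
  bdiag (dx%:M : 'M[R]_(nz.+1 * ny.+1 * nx))
    (bdiag (dy%:M : 'M[R]_(nz.+1 * ny * nx.+1))
           (dz%:M : 'M[R]_(nz * ny.+1 * nx.+1))).

Definition Hmat (U : 'cV[R]_Nn) : 'M[R]_Nn :=
  (hbar ^+ 2 / (2 * mass)) *: (Dmat *m DSpp *m invmx Dlp *m Dmat^T) + DVpp *m DU U.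

Definition Pmat (U : 'cV[R]_Nn) : 'M[R]_(Nn + Nn) :=
  block_mx DVpp (- (dt / (2 * hbar)) *: Hmat U) (- (dt / (2 * hbar)) *: Hmat U) DVpp.

Definition LW := I nz.+1 *t I ny.+1 *t ev R 1 nx.+1.
Definition LE := I nz.+1 *t I ny.+1 *t ev R nx.+1 nx.+1.
Definition LS := I nz.+1 *t ev R 1 ny.+1 *t I nx.+1.
Definition LN := I nz.+1 *t ev R ny.+1 ny.+1 *t I nx.+1.
Definition LB := ev R 1 nz.+1 *t I ny.+1 *t I nx.+1.
Definition LT := ev R nz.+1 nz.+1 *t I ny.+1 *t I nx.+1.
Definition Lmat := row_mx LW (row_mx LE (row_mx LS (row_mx LN (row_mx LB LT)))).

(* M = number of columns of L *)
Definition Mh := (nz.+1 * ny.+1 * 1 + (nz.+1 * ny.+1 * 1 + (nz.+1 * 1 * nx.+1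
   + (nz.+1 * 1 * nx.+1 + (1 * ny.+1 * nx.+1 + 1 * ny.+1 * nx.+1)))))%N.

Definition Dnhat : 'M[R]_Mh :=
  bdiag (- I _) (bdiag (I _) (bdiag (- I _) (bdiag (I _) (bdiag (- I _) (I _))))).

(* D''_{S,b}; the 2-D blocks tI_{nz+1} (x) tI_{ny+1} etc. are written as
   Kronecker products with the 1x1 identity so that the index sets match
   the columns of L_W, ..., L_T literally. *)
Definition DSbpp : 'M[R]_Mh :=
  bdiag ((dy * dz) *: (tI R nz.+1 *t tI R ny.+1 *t I 1))
  (bdiag ((dy * dz) *: (tI R nz.+1 *t tI R ny.+1 *t I 1))
  (bdiag ((dx * dz) *: (tI R nz.+1 *t I 1 *t tI R nx.+1))
  (bdiag ((dx * dz) *: (tI R nz.+1 *t I 1 *t tI R nx.+1))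
  (bdiag ((dx * dy) *: (I 1 *t tI R ny.+1 *t tI R nx.+1))
         ((dx * dy) *: (I 1 *t tI R ny.+1 *t tI R nx.+1)))))).

Definition Hperp : 'M[R]_(Nn, Mh) := (hbar ^+ 2 / (2 * mass)) *: (Lmat *m Dnhat *m DSbpp).

Definition CFLmat (U : 'cV[R]_Nn) : 'M[R]_Nn :=
  hbar^-1 *: (diag_invsqrt DVpp *m Hmat U *m diag_invsqrt DVpp).

(* psi^n = [psi_R^n ; psi_I^{n-1/2}],  g^{n+1/2} = [g_R^n ; g_I^{n+1/2}] *)
Definition psivec (psiR psiI : nat -> 'cV[R]_Nn) n : 'cV[R]_(Nn + Nn) :=
  col_mx (psiR n) (psiI n).
Definition gvec (gR gI : nat -> 'cV[R]_Mh) n : 'cV[R]_(Mh + Mh) :=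
  col_mx (gR n) (gI n).

(* J_1 (x) H_perp with J_1 = [0 1; -1 0] *)
Definition JHperp : 'M[R]_(Nn + Nn, Mh + Mh) := block_mx 0 Hperp (- Hperp) 0.

Definition probcur (psiR psiI : nat -> 'cV[R]_Nn) (gR gI : nat -> 'cV[R]_Mh) n : R :=
  (2 / hbar) *
  ((2^-1 *: (psivec psiR psiI n.+1 + psivec psiR psiI n))^T *m JHperp
     *m gvec gR gI n) 0 0.

End FDTDQ.

From HB Require Import structures.
From mathcomp Require Import all_boot all_order all_algebra.
From mathcomp Require Import classical_sets reals.
From mathcomp Require Import complex mxtens.
From mathcomp Require Import spectral sesquilinear ring lra.
Import Order.TTheory GRing.Theory Num.Theory.
Set Implicit Arguments. Unset Strict Implicit. Unset Printing Implicit Defensive.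
Local Open Scope ring_scope.

(* The discrete energy E(psi) = psi^T P psi is conserved by the FDTD-Q scheme
   as long as the probability current vanishes: testing the two update
   equations against psi_R^(n+1) + psi_R^n and psi_I^(n+1/2) + psi_I^(n-1/2)
   makes the D_V'' terms telescope and the H terms cancel, and what is left is
   the current.  Under the CFL condition P is positive definite: in the
   coordinates D_V''^(1/2) psi the off-diagonal term is the bilinear form of
   the symmetric CFL matrix, bounded via the spectral theorem by
   dt rho / 2 < 1 times the squared norm.  Finally
   |psi^n|^2 <= ||P^-1|| E(psi^n) = ||P^-1|| E(psi^0) <= ||P^-1|| ||P|| |psi^0|^2. *)

Section Dot.
Variable R : realFieldType.

Definition dot n (u v : 'cV[R]_n) : R := (u^T *m v) 0 0.

Lemma dotE n (u v : 'cV[R]_n) : dot u v = \sum_i u i 0 * v i 0.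
Proof. by rewrite /dot mxE; apply: eq_bigr => i _; rewrite mxE. Qed.

Lemma dotC n (u v : 'cV[R]_n) : dot u v = dot v u.
Proof. by rewrite !dotE; apply: eq_bigr => i _; rewrite mulrC. Qed.

Lemma dotDr n (u v w : 'cV[R]_n) : dot u (v + w) = dot u v + dot u w.
Proof. by rewrite /dot mulmxDr mxE. Qed.

Lemma dotDl n (u v w : 'cV[R]_n) : dot (v + w) u = dot v u + dot w u.
Proof. by rewrite dotC dotDr !(dotC u). Qed.

Lemma dotZr n a (u v : 'cV[R]_n) : dot u (a *: v) = a * dot u v.
Proof. by rewrite /dot -scalemxAr mxE. Qed.

Lemma dotZl n a (u v : 'cV[R]_n) : dot (a *: v) u = a * dot v u.
Proof. by rewrite dotC dotZr dotC. Qed.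

Lemma dotNr n (u v : 'cV[R]_n) : dot u (- v) = - dot u v.
Proof. by rewrite -scaleN1r dotZr mulN1r. Qed.

Lemma dotNl n (u v : 'cV[R]_n) : dot (- v) u = - dot v u.
Proof. by rewrite dotC dotNr dotC. Qed.

Lemma dotBr n (u v w : 'cV[R]_n) : dot u (v - w) = dot u v - dot u w.
Proof. by rewrite dotDr dotNr. Qed.

Lemma dot0r n (u : 'cV[R]_n) : dot u 0 = 0.
Proof. by rewrite /dot mulmx0 mxE. Qed.

Lemma dot_mulmxr n m (M : 'M[R]_(n, m)) u v : dot u (M *m v) = dot (M^T *m u) v.
Proof. by rewrite /dot trmx_mul trmxK mulmxA. Qed.

Lemma dot_sym n (M : 'M[R]_n) u v : M^T = M -> dot u (M *m v) = dot v (M *m u).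
Proof. by move=> sM; rewrite dot_mulmxr sM dotC. Qed.

Lemma dot_col_mx n1 n2 (a c : 'cV[R]_n1) (b d : 'cV[R]_n2) :
  dot (col_mx a b) (col_mx c d) = dot a c + dot b d.
Proof. by rewrite /dot tr_col_mx mul_row_col mxE. Qed.

Lemma dotvv_ge0 n (u : 'cV[R]_n) : 0 <= dot u u.
Proof. by rewrite dotE sumr_ge0 // => i _; rewrite -expr2 sqr_ge0. Qed.

Lemma dotvv_eq0 n (u : 'cV[R]_n) : (dot u u == 0) = (u == 0).
Proof.
apply/idP/eqP => [|->]; last by rewrite dot0r.
rewrite dotE psumr_eq0 => [/allP u0|i _]; last by rewrite -expr2 sqr_ge0.
apply/matrixP => i j; rewrite ord1 mxE.
by move: (u0 i (mem_index_enum i)); rewrite /= -expr2 sqrf_eq0 => /eqP.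
Qed.

Lemma dotvv_gt0 n (u : 'cV[R]_n) : (0 < dot u u) = (u != 0).
Proof. by rewrite lt0r dotvv_eq0 dotvv_ge0 andbT. Qed.

Lemma discriminant_le (p q r : R) : 0 <= r ->
  (forall t, 0 <= p + 2 * t * q + t ^+ 2 * r) -> q ^+ 2 <= p * r.
Proof.
move=> r_ge0 nonneg; have [r_gt0|r_le0] := ltrP 0 r.
  have := nonneg (- q / r).
  have -> : p + 2 * (- q / r) * q + (- q / r) ^+ 2 * r = p - q ^+ 2 / r.
    by field; rewrite gt_eqF.
  by rewrite subr_ge0 ler_pdivrMr.
have r0 : r = 0 by apply/le_anti; rewrite r_le0.
have [->|q_neq0] := eqVneq q 0; first by rewrite expr0n r0 mulr0.
have := nonneg (- (p + 1) / (2 * q)).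
have -> : p + 2 * (- (p + 1) / (2 * q)) * q + (- (p + 1) / (2 * q)) ^+ 2 * r = -1.
  by rewrite r0; field.
by rewrite lerNr oppr0 ler10.
Qed.

Definition posdefmx n (M : 'M[R]_n) :=
  M^T = M /\ forall z, z != 0 -> 0 < dot z (M *m z).

Lemma posdefmx_ge0 n (M : 'M[R]_n) z : posdefmx M -> 0 <= dot z (M *m z).
Proof.
move=> [_ pdM]; have [->|/pdM/ltW//] := eqVneq z 0.
by rewrite mulmx0 dot0r.
Qed.

Lemma posdefmx_unit n (M : 'M[R]_n) : posdefmx M -> M \in unitmx.
Proof.
move=> [_ pdM]; rewrite -row_free_unit -kermx_eq0; apply/eqP/row_matrixP => i.
rewrite row0; set r := row i _; apply: trmx_inj; rewrite trmx0.
have rM : r *m M = 0 by rewrite /r -row_mul mulmx_ker row0.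
apply/eqP; apply: contraT => /pdM; rewrite /dot trmxK mulmxA rM mul0mx mxE.
by rewrite ltxx.
Qed.

Lemma posdefmx_cauchy_schwarz n (M : 'M[R]_n) a b : posdefmx M ->
  dot a (M *m b) ^+ 2 <= dot a (M *m a) * dot b (M *m b).
Proof.
move=> pdM; apply: discriminant_le (posdefmx_ge0 b pdM) _ => t.
have := posdefmx_ge0 (a + t *: b) pdM.
rewrite mulmxDr !dotDl !dotDr -!scalemxAr !dotZl !dotZr (dot_sym b a pdM.1).
by move=> ?; nra.
Qed.

End Dot.

Section Norm2.
Variable R : realType.
Local Open Scope classical_set_scope.

Lemma norm2E n (u : 'cV[R]_n) : norm2 u = Num.sqrt (dot u u).
Proof. by rewrite /norm2 dotE; congr Num.sqrt; apply: eq_bigr => i _; rewrite expr2. Qed.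

Lemma norm2_ge0 n (u : 'cV[R]_n) : 0 <= norm2 u.
Proof. by rewrite norm2E sqrtr_ge0. Qed.

Lemma sqr_norm2 n (u : 'cV[R]_n) : norm2 u ^+ 2 = dot u u.
Proof. by rewrite norm2E sqr_sqrtr // dotvv_ge0. Qed.

Lemma norm2Z n (a : R) (v : 'cV[R]_n) : norm2 (a *: v) = `|a| * norm2 v.
Proof. by rewrite !norm2E dotZl dotZr mulrA -expr2 sqrtrM ?sqr_ge0 // sqrtr_sqr. Qed.

Lemma posdefmx1 n : posdefmx (1%:M : 'M[R]_n).
Proof. by split=> [|z]; rewrite ?trmx1 // mul1mx dotvv_gt0. Qed.

Lemma dot_le_norm2 n (a b : 'cV[R]_n) : dot a b <= norm2 a * norm2 b.
Proof.
apply: le_trans (ler_norm _) _.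
rewrite -(@ler_pXn2r _ 2) ?nnegrE ?mulr_ge0 ?norm2_ge0 //.
have := posdefmx_cauchy_schwarz a b (posdefmx1 n); rewrite !mul1mx.
by rewrite exprMn !sqr_norm2 real_normK ?num_real.
Qed.

Lemma opnorm2_has_ubound p q (M : 'M[R]_(p, q)) :
  has_ubound [set norm2 (M *m x) | x in [set x : 'cV[R]_q | norm2 x = 1]].
Proof.
exists (Num.sqrt (\sum_i dot (row i M)^T (row i M)^T)) => _ [x /= x1 <-].
rewrite norm2E ler_sqrt ?sumr_ge0 // => [|i _]; last exact: dotvv_ge0.
rewrite dotE; apply: ler_sum => i _.
have -> : (M *m x) i 0 = dot (row i M)^T x.
  by rewrite mxE dotE; apply: eq_bigr => j _; rewrite !mxE.
have := posdefmx_cauchy_schwarz (row i M)^T x (posdefmx1 q); rewrite !mul1mx.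
by rewrite -(sqr_norm2 x) x1 expr1n mulr1 expr2.
Qed.

Lemma opnorm2_ge0 p q (M : 'M[R]_(p, q)) : 0 <= opnorm2 M.
Proof.
rewrite /opnorm2; set E := [set _ | _ in _].
have [->|/set0P[y Ey]] := eqVneq E set0; first by rewrite sup0.
apply: le_trans _ (ub_le_sup (opnorm2_has_ubound M) Ey).
by case: Ey => x _ <-; exact: norm2_ge0.
Qed.

Lemma norm2_mulmx_le p q (M : 'M[R]_(p, q)) (x : 'cV[R]_q) :
  norm2 (M *m x) <= opnorm2 M * norm2 x.
Proof.
have [->|x_neq0] := eqVneq x 0.
  by rewrite mulmx0 norm2E dot0r sqrtr0 mulr_ge0 ?opnorm2_ge0 ?norm2_ge0.
have x_gt0 : 0 < norm2 x by rewrite norm2E sqrtr_gt0 dotvv_gt0.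
have : norm2 (M *m ((norm2 x)^-1 *: x)) <= opnorm2 M.
  apply: (ub_le_sup (opnorm2_has_ubound M)); exists ((norm2 x)^-1 *: x) => //=.
  by rewrite norm2Z ger0_norm ?invr_ge0 ?norm2_ge0 // mulVf // gt_eqF.
by rewrite -scalemxAr norm2Z ger0_norm ?invr_ge0 ?norm2_ge0 // ler_pdivrMl // mulrC.
Qed.

Lemma dot_mulmx_le_opnorm2 n (M : 'M[R]_n) z : dot z (M *m z) <= opnorm2 M * dot z z.
Proof.
apply: le_trans (dot_le_norm2 _ _) _.
apply: le_trans (ler_wpM2l (norm2_ge0 z) (norm2_mulmx_le M z)) _.
by rewrite mulrCA -expr2 sqr_norm2.
Qed.

(* Cauchy-Schwarz in the M-inner product, applied to z and M^-1 z. *)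
Lemma posdefmx_dot_le n (M : 'M[R]_n) z : posdefmx M ->
  dot z z <= opnorm2 (invmx M) * dot z (M *m z).
Proof.
move=> pdM; have [->|z_neq0] := eqVneq z 0; first by rewrite mulmx0 !dot0r mulr0.
have M_unit := posdefmx_unit pdM; set w := invmx M *m z.
have Mw : M *m w = z by rewrite mulKVmx.
have cs := posdefmx_cauchy_schwarz z w pdM; rewrite Mw [dot w z]dotC in cs.
have wz : dot z w <= opnorm2 (invmx M) * dot z z by exact: dot_mulmx_le_opnorm2.
have := le_trans cs (ler_wpM2l (posdefmx_ge0 z pdM) wz).
by rewrite expr2 mulrCA mulrA ler_pM2r ?dotvv_gt0.
Qed.

Lemma norm2_le_sqrt_cond2 n (M : 'M[R]_n) z w : posdefmx M ->
  dot z (M *m z) = dot w (M *m w) -> norm2 z <= Num.sqrt (cond2 M) * norm2 w.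
Proof.
move=> pdM Ezw; have cond2_ge0 : 0 <= cond2 M by rewrite mulr_ge0 ?opnorm2_ge0.
rewrite !norm2E -sqrtrM // ler_sqrt; last by rewrite (mulr_ge0 cond2_ge0) ?dotvv_ge0.
apply: le_trans (posdefmx_dot_le z pdM) _; rewrite Ezw /cond2 mulrAC mulrC.
by apply: ler_wpM2r; rewrite ?opnorm2_ge0 ?dot_mulmx_le_opnorm2.
Qed.

End Norm2.

Lemma eigenvalue_conj_unit (F : fieldType) n (V f : 'M[F]_n) : V \in unitmx ->
  eigenvalue (V *m f *m invmx V) =1 eigenvalue f.
Proof.
have conjP (W g : 'M[F]_n) : W \in unitmx ->
    {subset eigenvalue (W *m g *m invmx W) <= eigenvalue g}.
  move=> W_unit; rewrite -conjumx //; apply: (eigenvalue_conjmx (V := W)).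
    by apply: submx_full; rewrite row_full_unit.
  by rewrite row_free_unit.
move=> V_unit a; apply/idP/idP => [|fa]; first exact: (conjP V f).
have Vinv_unit : invmx V \in unitmx by rewrite unitmx_inv.
apply: (conjP _ _ Vinv_unit).
by rewrite invmxK !mulmxA mulVmx // mul1mx mulmxKV.
Qed.

Lemma eigenvalue_diag_mx (F : fieldType) n (d : 'rV[F]_n) a :
  eigenvalue (diag_mx d) a = [exists j, a == d 0 j].
Proof.
rewrite eigenvalue_root_char char_poly_trig // /root horner_prod.
have root_j j : (('X - (diag_mx d j j)%:P).[a] == 0) = (a == d 0 j).
  by rewrite hornerXsubC mxE eqxx mulr1n subr_eq0.
apply/prodf_eq0/existsP => -[j].
  by rewrite root_j; exists j.
by rewrite -root_j; exists j.
Qed.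

Section NormalMatrix.
Variable C : numClosedFieldType.
Local Open Scope sesquilinear_scope.

Lemma normalmx_eigenvalueE n (A : 'M[C]_n) a : A \is normalmx ->
  eigenvalue A a = [exists j, a == spectral_diag A 0 j].
Proof.
move=> /orthomx_spectralP A_spectral; rewrite {1}A_spectral.
rewrite -{2}[spectralmx A]invmxK eigenvalue_conj_unit ?unitmx_inv ?spectral_unit //.
exact: eigenvalue_diag_mx.
Qed.

Lemma form_diag_mx n (d : 'rV[C]_n) (z : 'cV[C]_n) :
  (z^t* *m diag_mx d *m z) 0 0 = \sum_j d 0 j * `|z j 0| ^+ 2.
Proof.
rewrite mul_mx_diag mxE; apply: eq_bigr => j _.
by rewrite !mxE normCKC mulrCA mulrA.
Qed.

Lemma form_unitarymx n (P : 'M[C]_n) (y : 'cV[C]_n) : P \is unitarymx ->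
  (y^t* *m y) 0 0 = \sum_j `|(P *m y) j 0| ^+ 2.
Proof.
move=> P_unitary; have PtP : P^t* *m P = 1%:M by apply/mulmx1C/unitarymxP.
have -> : y^t* *m y = (P *m y)^t* *m (P *m y).
  by rewrite trmx_mul map_mxM mulmxA -(mulmxA _ (P^t*)) PtP mulmx1.
by rewrite mxE; apply: eq_bigr => j _; rewrite !mxE normCKC.
Qed.

Lemma normalmx_form n (A : 'M[C]_n) (y : 'cV[C]_n) : A \is normalmx ->
  (y^t* *m A *m y) 0 0 = \sum_j spectral_diag A 0 j * `|(spectralmx A *m y) j 0| ^+ 2.
Proof.
move=> /orthomx_spectralP A_spectral; rewrite -form_diag_mx.
rewrite {1}A_spectral invmx_unitary ?spectral_unitarymx //.
by rewrite trmx_mul map_mxM !mulmxA.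
Qed.
End NormalMatrix.

Section RealSymmetric.
Variable R : realType.
Local Notation C := R[i].
Local Notation complexify := (map_mx (real_complex R)).
Local Open Scope classical_set_scope.
Local Open Scope sesquilinear_scope.

Lemma complexify_sym_normal n (A : 'M[R]_n) : A^T = A -> complexify A \is normalmx.
Proof.
move=> A_sym; apply: symmetric_normalmx.
  by apply/is_hermitianmxP; rewrite expr0 scale1r map_mx_id // map_trmx A_sym.
by apply/mxOverP => i j; rewrite mxE; apply/complex_realP; exists (A i j).
Qed.

Lemma spectral_diag_le_specrad n (A : 'M[R]_n) j : A^T = A ->
  `|spectral_diag (complexify A) 0 j| <= (specrad A)%:C%C.
Proof.
move=> /complexify_sym_normal A_normal; set d := spectral_diag _.
have normc_ge0 (z : C) : 0 <= ComplexField.Normc.normc z.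
  by case: z => a b; rewrite sqrtr_ge0.
have eigenE l : eigenvalue (complexify A) l = [exists j, l == d 0 j].
  exact: normalmx_eigenvalueE.
have ub : has_ubound [set ComplexField.Normc.normc l |
    l in [set l : C | eigenvalue (complexify A) l]].
  exists (\sum_k ComplexField.Normc.normc (d 0 k)) => _ [l /= + <-].
  rewrite eigenE => /existsP[k /eqP ->].
  by rewrite (bigD1 k) //= lerDl sumr_ge0.
have -> : `|d 0 j| = (ComplexField.Normc.normc (d 0 j))%:C%C.
  by case: (d 0 j) => a b; rewrite normc_def.
rewrite lecR; apply: (ub_le_sup ub); exists (d 0 j) => //=.
by rewrite eigenE; apply/existsP; exists j.
Qed.

Lemma sym_form_le_specrad n (A : 'M[R]_n) x : A^T = A ->
  `|dot x (A *m x)| <= specrad A * dot x x.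
Proof.
move=> A_sym; have A_normal := complexify_sym_normal A_sym.
set Ac := complexify A; pose xc := complexify x.
have xc_conj : xc^t* = xc^T.
  by apply/matrixP => i j; rewrite !mxE conj_Creal //; apply/complex_realP; eexists.
have formA : (dot x (A *m x))%:C%C = (xc^t* *m Ac *m xc) 0 0.
  by rewrite xc_conj /dot mulmxA /xc /Ac map_trmx -!map_mxM [in RHS]mxE.
have formI : (dot x x)%:C%C = (xc^t* *m xc) 0 0.
  by rewrite xc_conj /dot /xc map_trmx -!map_mxM [in RHS]mxE.
have norm_real (r : R) : `|r%:C%C| = (`|r|)%:C%C.
  by rewrite normc_def /= expr0n /= addr0 sqrtr_sqr.
rewrite -lecR -norm_real formA normalmx_form // rmorphM /= formI.
rewrite (form_unitarymx _ (spectral_unitarymx Ac)) mulr_sumr.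
apply: le_trans (ler_norm_sum _ _ _) _; apply: ler_sum => j _.
rewrite normrM normrX normr_id ler_wpM2r ?exprn_ge0 //.
exact: spectral_diag_le_specrad.
Qed.

Lemma sym_bilinear_le_specrad n (A : 'M[R]_n) u v : A^T = A ->
  `|dot u (A *m v)| <= specrad A / 2 * (dot u u + dot v v).
Proof.
move=> A_sym.
have polar : dot u (A *m v) =
    (dot (u + v) (A *m (u + v)) - dot (u - v) (A *m (u - v))) / 4.
  rewrite !mulmxDr !mulmxN !dotDl !dotDr !dotNr !dotNl (dot_sym v u A_sym).
  by field.
have parallelogram :
    dot (u + v) (u + v) + dot (u - v) (u - v) = 2 * (dot u u + dot v v).
  by rewrite !dotDl !dotDr !dotNr !dotNl (dotC v u); ring.
have := lerD (sym_form_le_specrad (u + v) A_sym) (sym_form_le_specrad (u - v) A_sym).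
rewrite -mulrDr parallelogram => /(le_trans (ler_normB _ _)) bound.
rewrite polar normrM [`|_^-1|]ger0_norm ?invr_ge0 ?ler0n //; lra.
Qed.

End RealSymmetric.

Lemma comm_mx_invmx (R : comUnitRingType) n (A B : 'M[R]_n) :
  comm_mx A B -> comm_mx A (invmx B).
Proof.
rewrite /comm_mx => AB; have [B_unit|/invmx_out-> //] := boolP (B \in unitmx).
by rewrite -[RHS](mulmxK B_unit) -(mulmxA (invmx B)) AB mulmxA mulVmx ?mul1mx.
Qed.

Section PosDiag.
Variable R : realType.

Definition posdiagmx n (M : 'M[R]_n) := is_diag_mx M /\ forall i, 0 < M i i.

Definition sqrt_diagmx n (M : 'M[R]_n) : 'M[R]_n := diag_mx (\row_i Num.sqrt (M i i)).

Lemma posdiagmxE n (M : 'M[R]_n) : posdiagmx M -> M = diag_mx (\row_i M i i).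
Proof.
move=> [/is_diag_mxP M_diag _]; apply/matrixP => i j; rewrite !mxE.
by have [->|/M_diag->] := eqVneq i j; rewrite ?mulr1n ?mulr0n.
Qed.

Lemma posdiagmx_tI p : posdiagmx (tI R p).
Proof.
split=> [|i]; last by rewrite mxE eqxx; case: ifP; rewrite ?invr_gt0 ?ltr0n ?ltr01.
by apply/is_diag_mxP => i j; rewrite mxE -val_eqE => /negPf ->.
Qed.

Lemma posdiagmxZ n a (M : 'M[R]_n) : 0 < a -> posdiagmx M -> posdiagmx (a *: M).
Proof.
move=> a_gt0 [/is_diag_mxP M_diag M_gt0]; split=> [|i]; last by rewrite mxE mulr_gt0.
by apply/is_diag_mxP => i j /M_diag; rewrite mxE => ->; rewrite mulr0.
Qed.

Lemma posdiagmx_tens m n (A : 'M[R]_m) (B : 'M[R]_n) :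
  posdiagmx A -> posdiagmx B -> posdiagmx (tensmx A B).
Proof.
move=> [/is_diag_mxP A_diag A_gt0] [/is_diag_mxP B_diag B_gt0]; split; last first.
  by move=> i; case: (mxtens_indexP i) => i1 i2; rewrite tensmxE mulr_gt0.
apply/is_diag_mxP => i j; case: (mxtens_indexP i) => i1 i2.
case: (mxtens_indexP j) => j1 j2; rewrite tensmxE.
have [<-|/A_diag->] := eqVneq i1 j1; last by rewrite mul0r.
by have [<-|/B_diag->] := eqVneq i2 j2; rewrite ?eqxx ?mulr0.
Qed.

Lemma posdiagmx_sym n (M : 'M[R]_n) : posdiagmx M -> M^T = M.
Proof. by move=> /posdiagmxE->; rewrite tr_diag_mx. Qed.

Lemma sqrt_diagmx_sym n (M : 'M[R]_n) : (sqrt_diagmx M)^T = sqrt_diagmx M.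
Proof. exact: tr_diag_mx. Qed.

Lemma sqrt_diagmxK n (M : 'M[R]_n) : posdiagmx M -> sqrt_diagmx M *m sqrt_diagmx M = M.
Proof.
move=> M_pd; rewrite mulmx_diag [RHS](posdiagmxE M_pd); congr diag_mx.
by apply/rowP => i; rewrite !mxE -expr2 sqr_sqrtr // ltW // M_pd.2.
Qed.

Lemma diag_invsqrtE n (M : 'M[R]_n) :
  diag_invsqrt M = diag_mx (\row_i (Num.sqrt (M i i))^-1).
Proof.
apply/matrixP => i j; rewrite !mxE.
by have [->|] := eqVneq i j; rewrite ?mulr1n ?mulr0n.
Qed.

Lemma diag_invsqrt_sym n (M : 'M[R]_n) : (diag_invsqrt M)^T = diag_invsqrt M.
Proof. by rewrite diag_invsqrtE tr_diag_mx. Qed.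

Lemma diag_invsqrtK n (M : 'M[R]_n) :
  posdiagmx M -> diag_invsqrt M *m sqrt_diagmx M = 1%:M.
Proof.
move=> [_ M_gt0]; rewrite diag_invsqrtE mulmx_diag; apply/matrixP => i j.
rewrite !mxE; have [->|] := eqVneq i j; rewrite ?mulr1n ?mulr0n //.
by rewrite mulVf // gt_eqF // sqrtr_gt0.
Qed.

End PosDiag.

Section Leapfrog.
Variable R : realFieldType.

Definition energy n (D H : 'M[R]_n) (c : R) (x y : 'cV[R]_n) :=
  dot x (D *m x) + dot y (D *m y) - c * dot x (H *m y).

(* Test the first update against x' + x and the second against y' + y. *)
Lemma leapfrog_energy_step n (D H : 'M[R]_n) (k : R) (x x' y y' fR fI : 'cV[R]_n) :
  D^T = D -> H^T = H -> k != 0 ->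
  k *: (D *m (x' - x)) = H *m y' - fI ->
  k *: (D *m (y' - y)) = - (H *m x) + fR ->
  dot (x' + x) fI = dot (y' + y) fR ->
  energy D H k^-1 x' y' = energy D H k^-1 x y.
Proof.
move=> D_sym H_sym k_neq0 stepx stepy balance.
have telescope (w w' : 'cV[R]_n) :
    dot w' (D *m w') - dot w (D *m w) = dot (w' + w) (D *m (w' - w)).
  by rewrite mulmxBr dotBr !dotDl (dot_sym w' w D_sym); ring.
have Ex : k * (dot x' (D *m x') - dot x (D *m x)) =
    dot x' (H *m y') + dot x (H *m y') - dot (x' + x) fI.
  by rewrite telescope -dotZr stepx dotBr dotDl.
have Ey : k * (dot y' (D *m y') - dot y (D *m y)) =
    - (dot x (H *m y') + dot x (H *m y)) + dot (y' + y) fR.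
  by rewrite telescope -dotZr stepy dotDr dotNr !dotDl !(dot_sym _ x H_sym).
apply: (mulfI k_neq0); rewrite /energy.
have -> : k * (dot x' (D *m x') + dot y' (D *m y') - k^-1 * dot x' (H *m y')) =
    k * (dot x (D *m x) + dot y (D *m y) - k^-1 * dot x (H *m y))
    + k * (dot x' (D *m x') - dot x (D *m x)) + k * (dot y' (D *m y') - dot y (D *m y))
    - k / k * (dot x' (H *m y') - dot x (H *m y)) by ring.
by rewrite Ex Ey balance divff // !dotDl; ring.
Qed.

End Leapfrog.

Section BlockDiag.
Variable R : realType.

Lemma tr_bdiag m n (A : 'M[R]_m) (B : 'M[R]_n) : (bdiag A B)^T = bdiag A^T B^T.
Proof. by rewrite /bdiag tr_block_mx !trmx0. Qed.

Lemma mul_bdiag m n (A C : 'M[R]_m) (B D : 'M[R]_n) :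
  bdiag A B *m bdiag C D = bdiag (A *m C) (B *m D).
Proof. by rewrite /bdiag mulmx_block !mulmx0 !mul0mx !addr0 !add0r. Qed.

End BlockDiag.

Section FDTDQ.
Variables (R : realType) (hbar mass dx dy dz dt : R) (nx ny nz : nat).
Variable U : 'cV[R]_(Nn nx ny nz).
Hypotheses (hbar_gt0 : 0 < hbar) (dx_gt0 : 0 < dx) (dy_gt0 : 0 < dy) (dz_gt0 : 0 < dz).

Local Notation D := (DVpp dx dy dz nx ny nz).
Local Notation DS := (DSpp dx dy dz nx ny nz).
Local Notation Dl := (Dlp dx dy dz nx ny nz).
Local Notation H := (Hmat hbar mass dx dy dz U).
Local Notation P := (Pmat hbar mass dx dy dz dt U).
Local Notation A := (CFLmat hbar mass dx dy dz U).

Lemma DVpp_posdiag : posdiagmx D.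
Proof.
apply: posdiagmxZ; first by rewrite !mulr_gt0.
by do 2?apply: posdiagmx_tens; apply: posdiagmx_tI.
Qed.

Lemma Hmat_sym : H^T = H.
Proof.
have tI_sym p : (tI R p)^T = tI R p by exact/posdiagmx_sym/posdiagmx_tI.
have DS_sym : DS^T = DS by rewrite /DSpp !tr_bdiag !linearZ /= !trmx_tens !tI_sym !trmx1.
have Dl_sym : Dl^T = Dl by rewrite /Dlp !tr_bdiag !tr_scalar_mx.
have DS_Dl : comm_mx DS Dl by rewrite /comm_mx /DSpp /Dlp !mul_bdiag !scalar_mxC.
rewrite /Hmat linearD linearZ /= !trmx_mul trmxK trmx_inv Dl_sym DS_sym.
rewrite -!mulmxA (mulmxA (invmx Dl)) -(comm_mx_invmx DS_Dl) !mulmxA.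
by rewrite /DU tr_diag_mx (posdiagmx_sym DVpp_posdiag) (posdiagmxE DVpp_posdiag) diag_mxC.
Qed.

Lemma CFLmat_sym : A^T = A.
Proof. by rewrite /CFLmat linearZ /= !trmx_mul !diag_invsqrt_sym Hmat_sym mulmxA. Qed.

Lemma Pmat_sym : P^T = P.
Proof. by rewrite /Pmat tr_block_mx (posdiagmx_sym DVpp_posdiag) linearZ /= Hmat_sym. Qed.

Lemma Pmat_form x y :
  dot (col_mx x y) (P *m col_mx x y) = energy D H (dt / hbar) x y.
Proof.
rewrite /Pmat /energy mul_block_col dot_col_mx !dotDr -!scalemxAl !dotZr.
by rewrite (dot_sym y x Hmat_sym); field; rewrite gt_eqF.
Qed.

Lemma probcurE (psiR psiI : nat -> 'cV[R]_(Nn nx ny nz)) (gR gI : nat -> 'cV[R]_(Mh nx ny nz)) n :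
  probcur hbar mass dx dy dz psiR psiI gR gI n =
  hbar^-1 * (dot (psiR n.+1 + psiR n) (Hperp hbar mass dx dy dz nx ny nz *m gI n)
           - dot (psiI n.+1 + psiI n) (Hperp hbar mass dx dy dz nx ny nz *m gR n)).
Proof.
rewrite /probcur -mulmxA -/(dot _ _) /psivec /gvec /JHperp mul_block_col.
rewrite !mul0mx add0r addr0 add_col_mx scale_col_mx dot_col_mx !dotZl mulNmx dotNr.
by rewrite -mulrDr mulrA; congr (_ * _); rewrite mulrAC divff ?pnatr_eq0 ?mul1r.
Qed.

Section CFL.
Hypotheses (dt_gt0 : 0 < dt) (cfl : dt * specrad A < 2).
Local Notation S := (sqrt_diagmx D).

Lemma Pmat_form_ge x y :
  (1 - dt * specrad A / 2) * (dot (S *m x) (S *m x) + dot (S *m y) (S *m y))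
  <= dot (col_mx x y) (P *m col_mx x y).
Proof.
set iS := diag_invsqrt D.
have D_form w : dot w (D *m w) = dot (S *m w) (S *m w).
  by rewrite -{1}(sqrt_diagmxK DVpp_posdiag) -mulmxA dot_mulmxr sqrt_diagmx_sym.
have iSK w : iS *m (S *m w) = w by rewrite mulmxA (diag_invsqrtK DVpp_posdiag) mul1mx.
have H_form : dot x (H *m y) = hbar * dot (S *m x) (A *m (S *m y)).
  rewrite /CFLmat -scalemxAl dotZr mulrA mulfV ?gt_eqF // mul1r.
  by rewrite -!mulmxA [RHS]dot_mulmxr diag_invsqrt_sym !iSK.
rewrite Pmat_form /energy !D_form H_form mulrA divfK ?gt_eqF //.
have := sym_bilinear_le_specrad (S *m x) (S *m y) CFLmat_sym.
move=> /(le_trans (ler_norm _)) /(ler_wpM2l (ltW dt_gt0)) bound.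
rewrite !mulrA in bound; by rewrite mulrBl mul1r lerD2l lerN2.
Qed.

Lemma Pmat_posdef : posdefmx P.
Proof.
split=> [|z]; first exact: Pmat_sym.
rewrite -[z]vsubmxK; set x := usubmx z; set y := dsubmx z => z_neq0.
apply: lt_le_trans (Pmat_form_ge x y); rewrite mulr_gt0 //.
  by rewrite subr_gt0 ltr_pdivrMr ?ltr0n // mul1r.
have S_inj w : (S *m w == 0) = (w == 0).
  apply/eqP/eqP => [Sw0|->]; last by rewrite mulmx0.
  by rewrite -[w]mul1mx -(diag_invsqrtK DVpp_posdiag) -mulmxA Sw0 mulmx0.
rewrite lt0r addr_ge0 ?dotvv_ge0 // andbT paddr_eq0 ?dotvv_ge0 //.
by rewrite !dotvv_eq0 !S_inj -col_mx_eq0.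
Qed.

End CFL.

End FDTDQ.

Theorem lemma3 (R : realType) (hbar mass dx dy dz : R) (nx ny nz nt : nat) (dt : R)
  (U : 'cV[R]_(Nn nx ny nz))
  (psiR psiI : nat -> 'cV[R]_(Nn nx ny nz))
  (gR gI : nat -> 'cV[R]_(Mh nx ny nz)) :
  0 < hbar -> 0 < mass -> 0 < dx -> 0 < dy -> 0 < dz ->
  (0 < nx)%N -> (0 < ny)%N -> (0 < nz)%N -> (0 < nt)%N ->
  0 < dt -> dt * specrad (CFLmat hbar mass dx dy dz U) < 2 ->
  (forall n, (n < nt)%N ->
     (hbar / dt) *: (DVpp dx dy dz nx ny nz *m (psiR n.+1 - psiR n))
     = Hmat hbar mass dx dy dz U *m psiI n.+1
       - Hperp hbar mass dx dy dz nx ny nz *m gI n) ->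
  (forall n, (n < nt)%N ->
     (hbar / dt) *: (DVpp dx dy dz nx ny nz *m (psiI n.+1 - psiI n))
     = - (Hmat hbar mass dx dy dz U *m psiR n)
       + Hperp hbar mass dx dy dz nx ny nz *m gR n) ->
  (forall n, (n < nt)%N -> probcur hbar mass dx dy dz psiR psiI gR gI n = 0) ->
  forall n, (n <= nt)%N ->
    norm2 (psivec psiR psiI n)
    <= Num.sqrt (cond2 (Pmat hbar mass dx dy dz dt U)) * norm2 (psivec psiR psiI 0).
Proof.
move=> hbar_gt0 _ dx_gt0 dy_gt0 dz_gt0 _ _ _ _ dt_gt0 cfl stepR stepI no_current.
move=> n le_n_nt; apply: norm2_le_sqrt_cond2.
  exact: (Pmat_posdef hbar_gt0 dx_gt0 dy_gt0 dz_gt0 dt_gt0 cfl).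
elim: n le_n_nt => [_|n IHn lt_n_nt]; first exact: erefl.
apply: etrans (IHn (ltnW lt_n_nt)).
rewrite !(Pmat_form mass dt U hbar_gt0 dx_gt0 dy_gt0 dz_gt0) -[dt / hbar]invf_div.
apply: leapfrog_energy_step (stepR n lt_n_nt) (stepI n lt_n_nt) _.
- exact: posdiagmx_sym (DVpp_posdiag nx ny nz dx_gt0 dy_gt0 dz_gt0).
- exact: Hmat_sym.
- by rewrite mulf_neq0 ?invr_eq0 ?gt_eqF.
- apply/eqP; have /eqP := no_current n lt_n_nt.
  by rewrite probcurE mulf_eq0 invr_eq0 gt_eqF //= subr_eq0.
Qed.
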